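(* Let $f\in C([t_+,\infty)\times \mathbb{R}^n,\mathbb{R}^m)$ have a partial derivative $\frac{\partial f}{\partial x}\in C([t_+,\infty)\times \mathbb{R}^n, \mathrm{L}(\mathbb{R}^n,\mathbb{R}^m))$, and suppose that for every fixed $t_*$, $x_*=x_{s_1}^*+x_{s_2}^*+x_{p_1}^*+x_{p_2}^*$ with $(t_*,x_* )\in L_{t_+}$ and $x_{s_2}^*\in D_{s_2}$ the operator $\Phi_{t_*,x_*}=\left[\frac{\partial Q_2f}{\partial x}(t_*,x_* )- B\right] P_2\colon X_2\to Y_2$ is invertible. Then: (i) $f$ satisfies locally a Lipschitz condition with respect to $x$ on $[t_+,\infty)\times\mathbb{R}^n$; and (ii) for every such $(t_*,x_* )$ there exist a neighborhood $U_\delta(t_*,x_{s_1}^*,x_{s_2}^*,x_{p_1}^* )=U_{\delta_1}(t_* )\times U_{\delta_2}(x_{s_1}^* )\times U_{\delta_3}(x_{s_2}^* )\times U_{\delta_4}(x_{p_1}^* )$ (where $U_{\delta_3}(x_{s_2}^* )\subseteq D_{s_2}$ may be closed), a neighborhood $U_\varepsilon(x_{p_2}^* )$ and an invertible operator $\Phi_{t_*,x_*}\in\mathrm{L}(X_2,Y_2)$ (namely the operator above) such that for all $(t,x_{s_1},x_{s_2},x_{p_1})\in U_\delta(t_*,x_{s_1}^*,x_{s_2}^*,x_{p_1}^* )$ and $x_{p_2}^1,x_{p_2}^2\in U_\varepsilon(x_{p_2}^* )$ the mapping $\widetilde{\Psi}(t,x_{s_1},x_{s_2},x_{p_1},x_{p_2}):=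 Q_2f(t,x_{s_1}+x_{s_2}+x_{p_1}+x_{p_2})-B\big|_{X_2}x_{p_2}$ satisfies $\|\widetilde{\Psi}(t,x_{s_1},x_{s_2},x_{p_1},x_{p_2}^1)- \widetilde{\Psi}(t,x_{s_1},x_{s_2},x_{p_1},x_{p_2}^2)-\Phi_{t_*,x_*} [x_{p_2}^1-x_{p_2}^2]\|\le c\|x_{p_2}^1-x_{p_2}^2\|$ with $c=c(\delta,\varepsilon)$ satisfying $\lim_{\delta,\varepsilon\to 0} c(\delta,\varepsilon)<\|\Phi_{t_*,x_*}^{-1}\|^{-1}$. Consequently, whenever the hypotheses of the global-solvability theorem with the differentiability/invertibility assumption hold, the hypotheses of the global-solvability theorem with the local-Lipschitz/contraction assumption (ii) also hold, since all their remaining hypotheses coincide.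
   Context: Consider the DAE $\frac{d}{dt}[Ax]+Bx=f(t,x)$, $t\in[t_+,\infty)$, $x\in\mathbb{R}^n$, with $A,B\in\mathrm{L}(\mathbb{R}^n,\mathbb{R}^m)$ forming a singular pencil $\lambda A+B$ whose regular block has index at most 1. There are direct decompositions $\mathbb{R}^n=X_{s_1}\dot+X_{s_2}\dot+X_1\dot+X_2$, $\mathbb{R}^m=Y_{s_1}\dot+Y_{s_2}\dot+Y_1\dot+Y_2$ with corresponding projectors $S_i\colon\mathbb{R}^n\to X_{s_i}$, $P_i\colon\mathbb{R}^n\to X_i$, $F_i\colon\mathbb{R}^m\to Y_{s_i}$, $Q_i\colon\mathbb{R}^m\to Y_i$ ($i=1,2$), and every $x\in\mathbb{R}^n$ is written $x=x_{s_1}+x_{s_2}+x_{p_1}+x_{p_2}$ with $x_{s_i}=S_ix$, $x_{p_i}=P_ix$. $L_{t_+}=\{(t,x)\in[t_+,\infty)\times\mathbb{R}^n\mid (F_2+Q_2)[Bx-f(t,x)]=0\}$, and $D_{s_2}\subset X_{s_2}$ is a given set. The two global-solvability theorems share the remaining hypotheses (unique solvability of the constraint for $x_{p_2}$ and the Lyapunov-type function condition) and differ only in the hypothesis given in the claim as the assumption versus (ii). *)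

(* Vectors of R^n are row vectors 'rV[R]_n; a linear map R^n -> R^m is a
   matrix M : 'M[R]_(n,m) acting by x |-> x *m M (row-vector convention).
   Projectors are square matrices acting the same way. *)
From HB Require Import structures.
From mathcomp Require Import all_boot all_order all_algebra.
From mathcomp Require Import all_classical all_reals all_analysis.
Set Implicit Arguments. Unset Strict Implicit. Unset Printing Implicit Defensive.
Import Order.TTheory GRing.Theory Num.Theory.
Import numFieldNormedType.Exports.
Local Open Scope classical_set_scope.
Local Open Scope ring_scope.

Definition direct_decomp4 (R : realType) (k : nat) (P1 P2 P3 P4 : 'M[R]_k) :=
  [/\ P1 + P2 + P3 + P4 = 1%:M,
      [/\ P1 *m P1 = P1, P2 *m P2 = P2, P3 *m P3 = P3 & P4 *m P4 = P4]
    & forall i j : 'I_4, i != j ->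
        (nth 0 [:: P1; P2; P3; P4] i) *m (nth 0 [:: P1; P2; P3; P4] j) = 0].

Definition range_proj (R : realType) (k : nat) (P : 'M[R]_k) : set 'rV[R]_k :=
  [set x | x *m P = x].

(* Phi : 'M_(n,m) restricted to X = range P is an invertible operator X -> Y
   (Y = range Q): it maps X into Y and is bijective from X onto Y. *)
Definition invertible_between (R : realType) (n m : nat)
    (P : 'M[R]_n) (Q : 'M[R]_m) (Phi : 'M[R]_(n, m)) :=
  (forall x, range_proj P x -> range_proj Q (x *m Phi)) /\
  (forall y, range_proj Q y ->
     exists x, [/\ range_proj P x, x *m Phi = y &
                   forall x', range_proj P x' -> x' *m Phi = y -> x' = x]).

(* operator norm of the inverse (Phi|_X)^{-1} : Y -> X, i.e.
   sup { ||Phi^{-1} y|| : y in Y, ||y|| <= 1 }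
 = sup { ||x|| : x in X, ||Phi x|| <= 1 }. *)
Definition inv_opnorm (R : realType) (n m : nat)
    (P : 'M[R]_n) (Phi : 'M[R]_(n, m)) : R :=
  sup [set `|x| | x in [set x : 'rV[R]_n | range_proj P x /\ `|x *m Phi| <= 1]].

Definition loc_lipschitz_x (R : realType) (n m : nat) (tp : R)
    (f : R -> 'rV[R]_n -> 'rV[R]_m) :=
  forall (t0 : R) (x0 : 'rV[R]_n), tp <= t0 ->
    exists r : R, 0 < r /\ exists L : R,
      forall (t : R) (x1 x2 : 'rV[R]_n), tp <= t -> `|t - t0| < r ->
        `|x1 - x0| < r -> `|x2 - x0| < r ->
        `|f t x1 - f t x2| <= L * `|x1 - x2|.

Definition is_partial_deriv_x (R : realType) (n m : nat) (tp : R)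
    (f : R -> 'rV[R]_n -> 'rV[R]_m) (Df : R -> 'rV[R]_n -> 'M[R]_(n, m)) :=
  forall (t : R) (x : 'rV[R]_n), tp <= t ->
    differentiable (f t) x /\
    ('d (f t) x : 'rV[R]_n -> 'rV[R]_m) = (fun h => h *m Df t x).

(* Both parts rest on the mean value inequality for x |-> f t x, whose
   derivative Df is continuous.  (i): near (t0, x0) the derivative stays within
   1 of Df t0 x0, so f t is Lipschitz there.  (ii): for y1, y2 in X2 the points
   z_i = xs1 + xs2 + xp1 + y_i satisfy z1 - z2 = y1 - y2, hence
   Psi(y1) - Psi(y2) - Phi (y1 - y2) = (f t z1 - f t z2 - Df ts xs (z1 - z2)) Q2,
   which is bounded by a constant times sup |Df t x - Df ts xs| over the box of
   radius 3 delta + eps around (ts, xs), times |y1 - y2|.  By continuity of Df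
   this c(delta, eps) tends to 0 < |Phi^-1|^-1, the inverse being a bounded
   linear map; if X2 = 0 the estimate is vacuous and any constant c will do. *)

From HB Require Import structures.
From mathcomp Require Import all_boot all_order all_algebra.
From mathcomp Require Import all_classical all_reals all_analysis.
From mathcomp Require Import ring lra.
Set Implicit Arguments. Unset Strict Implicit. Unset Printing Implicit Defensive.
Import Order.TTheory GRing.Theory Num.Theory.
Import numFieldNormedType.Exports.
Local Open Scope classical_set_scope.
Local Open Scope ring_scope.

Section MatrixNorm.
Variable R : realType.

(* The norm of a matrix is the largest absolute value of its entries. *)
Lemma ler_mx_norm_entry p q (M : 'M[R]_(p, q)) i j : `|M i j| <= `|M|.
Proof.
rewrite [leRHS]/Num.norm /= mx_normrE.
exact: (le_bigmax _ (fun ij : 'I_p * 'I_q => `|M ij.1 ij.2|) (i, j)).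
Qed.

Lemma mx_norm_le p q (M : 'M[R]_(p, q)) K :
  0 <= K -> (forall i j, `|M i j| <= K) -> `|M| <= K.
Proof.
move=> K_ge0 MK; rewrite [leLHS]/Num.norm /= mx_normrE.
by apply/bigmax_leP; split => // -[i j] _; exact: MK.
Qed.

Lemma ler_mulmx_norm p n q (A : 'M[R]_(p, n)) (M : 'M[R]_(n, q)) :
  `|A *m M| <= n%:R * `|A| * `|M|.
Proof.
apply: mx_norm_le => [|i j]; first by rewrite !mulr_ge0.
rewrite mxE; apply: le_trans (ler_norm_sum _ _ _) _.
apply: (@le_trans _ _ (\sum_(k < n) `|A| * `|M|)).
  by apply: ler_sum => k _; rewrite normrM ler_pM ?ler_mx_norm_entry.
by rewrite sumr_const card_ord -mulrA mulr_natl.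
Qed.

End MatrixNorm.

Lemma segment_in_closed_ball (R : realType) (V : normedModType R) (x0 x1 x2 : V) (rho s : R) :
  0 <= s <= 1 -> `|x1 - x0| <= rho -> `|x2 - x0| <= rho ->
  `|x2 + s *: (x1 - x2) - x0| <= rho.
Proof.
move=> /andP[s_ge0 s_le1] x1_near x2_near.
have -> : x2 + s *: (x1 - x2) - x0 = (1 - s) *: (x2 - x0) + s *: (x1 - x0).
  have -> : x1 - x2 = (x1 - x0) - (x2 - x0) by rewrite opprB subrKA.
  rewrite addrAC; move: (x1 - x0) (x2 - x0) => b a.
  by rewrite scalerBr scalerBl scale1r addrA addrAC.
apply: le_trans (ler_normD _ _) _.
rewrite !normrZ !ger0_norm ?subr_ge0 //; nra.
Qed.

Lemma ler_normB4 (R : numDomainType) (V : normedZmodType R) (a1 a2 a3 a4 b1 b2 b3 b4 : V) :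
  `|b1 + b2 + b3 + b4 - (a1 + a2 + a3 + a4)|
    <= `|b1 - a1| + `|b2 - a2| + `|b3 - a3| + `|b4 - a4|.
Proof.
by do 3!(rewrite opprD addrACA; apply: le_trans (ler_normD _ _) _; rewrite lerD2r).
Qed.

Lemma halfspace_continuous_dist_lt (R : realType) n (V : normedModType R)
    (F : R -> 'rV[R]_n -> V) (tp ts : R) (xs : 'rV[R]_n) :
  {within [set p : R * 'rV[R]_n | tp <= p.1], continuous (fun p => F p.1 p.2)} ->
  tp <= ts -> forall eta, 0 < eta ->
  exists2 del, 0 < del & forall t x, tp <= t -> `|t - ts| < del ->
    `|x - xs| < del -> `|F t x - F ts xs| < eta.
Proof.
move=> /subspace_continuousP Fc hts eta eta_gt0.
move: (Fc (ts, xs) hts) => /cvgr_distC_lt /(_ eta eta_gt0).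
rewrite near_withinE => /nbhs_ballP [del del_gt0 Fdel].
exists del => // t x ht t_near x_near.
by apply: (Fdel (t, x)) => //; split; rewrite /= -ball_normE /= distrC.
Qed.

Section MeanValue.
Variables (R : realType) (n m : nat) (g : 'rV[R]_n -> 'rV[R]_m).
Variable D : 'rV[R]_n -> 'M[R]_(n, m).
Hypothesis dg : forall x,
  differentiable g x /\ ('d g x : 'rV[R]_n -> 'rV[R]_m) = (fun h => h *m D x).

Lemma mvt_entry (x1 x2 : 'rV[R]_n) (j : 'I_m) :
  exists2 s : R, 0 <= s <= 1 &
    (g x1 - g x2) 0 j = ((x1 - x2) *m D (x2 + s *: (x1 - x2))) 0 j.
Proof.
pose xi s : 'rV[R]_n := x2 + s *: (x1 - x2).
have dxi s : differentiable xi s /\ ('d xi s : R -> 'rV[R]_n) = *:%R^~ (x1 - x2).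
  have [dxi_s ->] := is_diffD (is_diff_cst x2 s) (is_diff_scalel s (x1 - x2)).
  by split; [exact: dxi_s | rewrite add0r].
have dgxi s : differentiable (g \o xi) s /\ 'd (g \o xi) s 1 = (x1 - x2) *m D (xi s).
  have [dxi_s dxiE] := dxi s; have [dg_s dgE] := dg (xi s).
  split; first exact: differentiable_comp.
  by rewrite diff_comp // /= dxiE dgE /= scale1r.
pose psi (s : R) : R := (g \o xi) s 0 j.
have psi_deriv (s : R) : is_derive s 1 psi (((x1 - x2) *m D (xi s)) 0 j).
  have [dgxi_s dgxiE] := dgxi s.
  have gxi_der : derivable (g \o xi) s 1 by exact: diff_derivable.
  apply: DeriveDef; first by move/derivable_mxP : gxi_der; apply.
  by rewrite -dgxiE -deriveE // derive_mx // mxE.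
have [s s01 psiE] : exists2 s, s \in `[0, 1]%R &
    psi 1 - psi 0 = ((x1 - x2) *m D (xi s)) 0 j * (1 - 0).
  apply: MVT_segment => //.
  apply: continuous_subspaceT => s; apply/differentiable_continuous.
  by apply/derivable1_diffP; have [] := psi_deriv s.
exists s; first by rewrite !(itvP s01).
move: psiE; rewrite subr0 mulr1 /psi /xi /= scale1r scale0r addr0 subrKC => <-.
by rewrite !mxE.
Qed.

Lemma mean_value_ineq (A : 'M[R]_(n, m)) (x0 x1 x2 : 'rV[R]_n) (rho K : R) :
  `|x1 - x0| <= rho -> `|x2 - x0| <= rho ->
  (forall x, `|x - x0| <= rho -> `|D x - A| <= K) ->
  `|g x1 - g x2 - (x1 - x2) *m A| <= n%:R * K * `|x1 - x2|.
Proof.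
move=> x1_near x2_near DK.
have K_ge0 : 0 <= K.
  by apply: le_trans (DK x0 _); rewrite ?subrr ?normr0 // (le_trans _ x1_near).
apply: mx_norm_le => [|i j]; first by rewrite !mulr_ge0.
have [s s01 gE] := mvt_entry x1 x2 j.
have -> : (g x1 - g x2 - (x1 - x2) *m A) i j
    = ((x1 - x2) *m (D (x2 + s *: (x1 - x2)) - A)) 0 j.
  by rewrite (ord1 i) mulmxBr; move: gE; rewrite !mxE => ->.
apply: le_trans (ler_mx_norm_entry _ _ _) _.
apply: le_trans (ler_mulmx_norm _ _) _.
rewrite mulrAC; apply: ler_wpM2r => //; apply: ler_wpM2l => //.
exact/DK/segment_in_closed_ball.
Qed.

End MeanValue.

Lemma partial_deriv_loc_lipschitz (R : realType) (n m : nat) (tp : R)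
    (f : R -> 'rV[R]_n -> 'rV[R]_m) (Df : R -> 'rV[R]_n -> 'M[R]_(n, m)) :
  is_partial_deriv_x tp f Df ->
  {within [set p : R * 'rV[R]_n | tp <= p.1], continuous (fun p => Df p.1 p.2)} ->
  loc_lipschitz_x tp f.
Proof.
move=> pd Dfc t0 x0 ht0.
have [del del_gt0 Df_near] := halfspace_continuous_dist_lt x0 Dfc ht0 ltr01.
have del2_lt : del / 2 < del by rewrite ltr_pdivrMr // ltr_pMr // ltr1n.
exists (del / 2); split; first by rewrite divr_gt0.
exists (n%:R * (`|Df t0 x0| + 1)) => t x1 x2 ht t_near x1_near x2_near.
have := mean_value_ineq (fun x => pd t x ht) (A := 0) (ltW x1_near) (ltW x2_near).
rewrite mulmx0 subr0; apply => x x_near; rewrite subr0.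
rewrite -[Df t x](subrK (Df t0 x0)) addrC.
apply: le_trans (ler_normD _ _) _; rewrite lerD2l ltW //.
apply: Df_near => //.
  exact: lt_trans t_near del2_lt.
exact: le_lt_trans x_near del2_lt.
Qed.

Section ContinuityModulus.
Variables (R : realType) (n : nat) (V : normedModType R).
Variables (F : R -> 'rV[R]_n -> V) (tp ts : R) (xs : 'rV[R]_n).

Definition continuity_modulus (rho : R) : R :=
  sup [set `|F q.1 q.2 - F ts xs| | q in
    [set q : R * 'rV[R]_n | [/\ tp <= q.1, `|q.1 - ts| <= rho & `|q.2 - xs| <= rho]]].

Hypotheses (Fc : {within [set p : R * 'rV[R]_n | tp <= p.1],
                   continuous (fun p => F p.1 p.2)})
           (hts : tp <= ts).

Lemma continuity_modulus_small (eta : R) : 0 < eta ->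
  exists2 del, 0 < del & forall rho, 0 <= rho < del ->
    (forall t x, tp <= t -> `|t - ts| <= rho -> `|x - xs| <= rho ->
       `|F t x - F ts xs| <= continuity_modulus rho)
    /\ continuity_modulus rho <= eta.
Proof.
move=> eta_gt0; have [del del_gt0 F_near] := halfspace_continuous_dist_lt xs Fc hts eta_gt0.
exists del => // rho /andP[rho_ge0 rho_lt].
have ub_eta : ubound [set `|F q.1 q.2 - F ts xs| | q in
    [set q : R * 'rV[R]_n | [/\ tp <= q.1, `|q.1 - ts| <= rho & `|q.2 - xs| <= rho]]] eta.
  move=> _ [[t x] /= [ht t_near x_near] <-]; apply: ltW; apply: F_near => //.
    exact: le_lt_trans t_near rho_lt.
  exact: le_lt_trans x_near rho_lt.
have F_le_mod t x : tp <= t -> `|t - ts| <= rho -> `|x - xs| <= rho ->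
    `|F t x - F ts xs| <= continuity_modulus rho.
  move=> ht t_near x_near; apply: ub_le_sup; first by exists eta.
  by exists (t, x).
split => //; apply: ge_sup => //.
by exists `|F ts xs - F ts xs|, (ts, xs); rewrite /= ?subrr ?normr0.
Qed.

End ContinuityModulus.

Section InverseNorm.
Variables (R : realType) (n m : nat) (P : 'M[R]_n) (Q : 'M[R]_m) (Phi : 'M[R]_(n, m)).
Hypotheses (QQ : Q *m Q = Q) (Phi_inv : invertible_between P Q Phi).

Lemma invertible_between_left_inverse :
  exists M : 'M[R]_(m, n), forall x, range_proj P x -> x *m Phi *m M = x.
Proof.
have [Phi_PQ Phi_onto] := Phi_inv.
have rangeQ y : range_proj Q (y *m Q) by rewrite /range_proj /= -mulmxA QQ.
have [G GP] := choice (fun i : 'I_m => Phi_onto _ (rangeQ (delta_mx 0 i))).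
pose M := \matrix_i G i.
have MP : M *m P = M.
  by apply/row_matrixP => i; rewrite row_mul rowK; case: (GP i).
have MPhi : M *m Phi = Q.
  by apply/row_matrixP => i; rewrite row_mul rowK rowE; case: (GP i).
exists M => x xP.
have [x' [_ _ x'_uniq]] := Phi_onto _ (Phi_PQ x xP).
rewrite [LHS]x'_uniq; first exact/esym/x'_uniq.
  by rewrite /range_proj /= -mulmxA MP.
by rewrite -mulmxA MPhi; exact: Phi_PQ.
Qed.

Lemma inv_opnorm_gt0 (x : 'rV[R]_n) : range_proj P x -> x != 0 -> 0 < inv_opnorm P Phi.
Proof.
move=> xP x_neq0; have [M PhiM] := invertible_between_left_inverse.
have ub_M : ubound [set `|z| | z in [set z : 'rV[R]_n | range_proj P z /\ `|z *m Phi| <= 1]]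
    (m%:R * `|M|).
  move=> _ [z [zP zPhi] <-]; rewrite -(PhiM z zP).
  apply: le_trans (ler_mulmx_norm _ _) _.
  by rewrite mulrAC ler_piMr // mulr_ge0.
have xPhi_neq0 : x *m Phi != 0.
  by apply: contraNneq x_neq0 => xPhi0; rewrite -(PhiM x xP) xPhi0 mul0mx.
pose k := `|x *m Phi|^-1.
have k_gt0 : 0 < k by rewrite invr_gt0 normr_gt0.
apply: lt_le_trans (_ : 0 < `|k *: x|) _; first by rewrite normr_gt0 scaler_eq0 negb_or gt_eqF.
apply: ub_le_sup; first by exists (m%:R * `|M|).
exists (k *: x) => //; split; first by rewrite /range_proj /= -scalemxAl xP.
by rewrite -scalemxAl normrZ gtr0_norm // mulVf // normr_eq0.
Qed.

End InverseNorm.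

Definition lim_right0 (R : realType) (c : R -> R -> R) (l : R) :=
  forall eta : R, 0 < eta -> exists r : R, 0 < r /\
    forall d e : R, 0 < d -> d < r -> 0 < e -> e < r -> `|c d e - l| < eta.

Lemma Psi_incrementE (R : realType) (n m : nat) (g : 'rV[R]_n -> 'rV[R]_m)
    (A B : 'M[R]_(n, m)) (P : 'M[R]_n) (Q : 'M[R]_m) (w y1 y2 : 'rV[R]_n) :
  y1 *m P = y1 -> y2 *m P = y2 ->
  g (w + y1) *m Q - y1 *m B - (g (w + y2) *m Q - y2 *m B)
    - (y1 - y2) *m (P *m (A *m Q - B))
  = (g (w + y1) - g (w + y2) - (y1 - y2) *m A) *m Q.
Proof.
move=> y1P y2P.
rewrite mulmxA mulmxBl y1P y2P mulmxBr mulmxA !mulmxBl.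
move: (g (w + y1) *m Q) (g (w + y2) *m Q) => a b.
by apply/rowP => k; rewrite !mxE; ring.
Qed.

Section LocalContraction.
Variables (R : realType) (n m : nat) (B : 'M[R]_(n, m)).
Variables (S1 S2 P1 P2 : 'M[R]_n) (Q2 : 'M[R]_m) (tp : R) (Ds2 : set 'rV[R]_n).
Variables (f : R -> 'rV[R]_n -> 'rV[R]_m) (Df : R -> 'rV[R]_n -> 'M[R]_(n, m)).
Variables (ts : R) (xs : 'rV[R]_n).

Local Notation Phi := (P2 *m (Df ts xs *m Q2 - B)).
Local Notation Psi t xs1 xs2 xp1 xp2 := (f t (xs1 + xs2 + xp1 + xp2) *m Q2 - xp2 *m B).

Definition contraction_bound (d0 e0 : R) (c : R -> R -> R) :=
  forall d e : R, 0 < d -> d <= d0 -> 0 < e -> e <= e0 ->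
  forall (t : R) (xs1 xs2 xp1 y1 y2 : 'rV[R]_n),
    tp <= t -> `|t - ts| <= d ->
    range_proj S1 xs1 -> `|xs1 - xs *m S1| <= d ->
    range_proj S2 xs2 -> Ds2 xs2 -> `|xs2 - xs *m S2| <= d ->
    range_proj P1 xp1 -> `|xp1 - xs *m P1| <= d ->
    range_proj P2 y1 -> `|y1 - xs *m P2| < e ->
    range_proj P2 y2 -> `|y2 - xs *m P2| < e ->
    `|Psi t xs1 xs2 xp1 y1 - Psi t xs1 xs2 xp1 y2 - (y1 - y2) *m Phi|
      <= c d e * `|y1 - y2|.

Lemma contraction_bound_trivial (c : R -> R -> R) :
  (forall y, range_proj P2 y -> y = 0) -> contraction_bound 1 1 c.
Proof.
move=> X2_0 d e _ _ _ _ t xs1 xs2 xp1 y1 y2 _ _ _ _ _ _ _ _ _ /X2_0 -> _ /X2_0 -> _.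
by rewrite !subrr mul0mx subr0 !normr0 mulr0.
Qed.

(* [3 * d + e] bounds the distance from [xs] of the points [xs1 + xs2 + xp1 + y];
   the factors [m * `|Q2|] and [n] come from the entrywise matrix norm. *)
Definition contraction_modulus (d e : R) : R :=
  m%:R * `|Q2| * n%:R * continuity_modulus Df tp ts xs (3 * d + e).

Hypotheses (pd : is_partial_deriv_x tp f Df)
  (Dfc : {within [set p : R * 'rV[R]_n | tp <= p.1], continuous (fun p => Df p.1 p.2)})
  (hts : tp <= ts) (decomp : S1 + S2 + P1 + P2 = 1%:M).

Lemma contraction_modulus_bound :
  exists2 d0, 0 < d0 & contraction_bound d0 d0 contraction_modulus.
Proof.
have [del del_gt0 modulus_del] := continuity_modulus_small xs Dfc hts ltr01.
exists (del / 8); first by rewrite divr_gt0.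
move=> d e d_gt0 d_le e_gt0 e_le t xs1 xs2 xp1 y1 y2 ht t_near _ xs1_near _ _ xs2_near
  _ xp1_near y1P y1_near y2P y2_near.
have rho_ge0 : 0 <= 3 * d + e by lra.
have [Df_le _] := modulus_del (3 * d + e) ltac:(apply/andP; split => //; lra).
have xsE : xs = xs *m S1 + xs *m S2 + xs *m P1 + xs *m P2.
  by rewrite -!mulmxDr decomp mulmx1.
have near_xs y : `|y - xs *m P2| < e -> `|xs1 + xs2 + xp1 + y - xs| <= 3 * d + e.
  move=> y_near; rewrite [X in _ - X]xsE; apply: le_trans (ler_normB4 _ _ _ _ _ _ _ _) _.
  lra.
have Df_near x : `|x - xs| <= 3 * d + e ->
    `|Df t x - Df ts xs| <= continuity_modulus Df tp ts xs (3 * d + e).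
  by apply: Df_le => //; lra.
have := mean_value_ineq (fun x => pd x ht) (near_xs _ y1_near) (near_xs _ y2_near) Df_near.
have -> : xs1 + xs2 + xp1 + y1 - (xs1 + xs2 + xp1 + y2) = y1 - y2.
  by rewrite opprD addrACA subrr add0r.
move=> mvt; rewrite Psi_incrementE //; apply: le_trans (ler_mulmx_norm _ _) _.
apply: le_trans (ler_wpM2r (normr_ge0 _) (ler_wpM2l (ler0n _ m) mvt)) _.
rewrite /contraction_modulus; lra.
Qed.

Lemma contraction_modulus_lim : lim_right0 contraction_modulus 0.
Proof.
move=> eta eta_gt0; rewrite /contraction_modulus.
set C := m%:R * `|Q2| * n%:R.
have C_ge0 : 0 <= C by rewrite !mulr_ge0.
have eta'_gt0 : 0 < eta / (C + 1) by rewrite divr_gt0 // ltr_wpDl.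
have [del del_gt0 modulus_del] := continuity_modulus_small xs Dfc hts eta'_gt0.
exists (del / 4); split; first by rewrite divr_gt0.
move=> d e d_gt0 d_lt e_gt0 e_lt.
have [Df_le modulus_le] := modulus_del (3 * d + e) ltac:(apply/andP; split; lra).
have modulus_ge0 : 0 <= continuity_modulus Df tp ts xs (3 * d + e).
  by apply: le_trans (Df_le ts xs hts _ _); rewrite ?subrr ?normr0 //; lra.
rewrite subr0 ger0_norm ?mulr_ge0 //.
apply: le_lt_trans (ler_wpM2l C_ge0 modulus_le) _.
by rewrite mulrA ltr_pdivrMr ?ltr_wpDl //; lra.
Qed.

End LocalContraction.

Theorem corollary1 (R : realType) (n m : nat) (B : 'M[R]_(n, m))
  (S1 S2 P1 P2 : 'M[R]_n) (F1 F2 Q1 Q2 : 'M[R]_m)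
  (tp : R) (Ds2 : set 'rV[R]_n)
  (f : R -> 'rV[R]_n -> 'rV[R]_m) (Df : R -> 'rV[R]_n -> 'M[R]_(n, m)) :
  direct_decomp4 S1 S2 P1 P2 ->
  direct_decomp4 F1 F2 Q1 Q2 ->
  Ds2 `<=` range_proj S2 ->
  {within [set p : R * 'rV[R]_n | tp <= p.1],
     continuous (fun p : R * 'rV[R]_n => f p.1 p.2)} ->
  is_partial_deriv_x tp f Df ->
  {within [set p : R * 'rV[R]_n | tp <= p.1],
     continuous (fun p : R * 'rV[R]_n => Df p.1 p.2)} ->
  (* invertibility of Phi = [d(Q2 f)/dx (ts,xs) - B] P2 : X2 -> Y2
     at every (ts,xs) in L_{t+} with S2 xs in D_{s2} *)
  (forall (ts : R) (xs : 'rV[R]_n),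
     tp <= ts -> (xs *m B - f ts xs) *m (F2 + Q2) = 0 -> Ds2 (xs *m S2) ->
     invertible_between P2 Q2 (P2 *m (Df ts xs *m Q2 - B))) ->
  (* (i) *)
  loc_lipschitz_x tp f /\
  (* (ii) *)
  (forall (ts : R) (xs : 'rV[R]_n),
     tp <= ts -> (xs *m B - f ts xs) *m (F2 + Q2) = 0 -> Ds2 (xs *m S2) ->
     let Phi := P2 *m (Df ts xs *m Q2 - B) in
     let Psi t (xs1 xs2 xp1 xp2 : 'rV[R]_n) :=
       f t (xs1 + xs2 + xp1 + xp2) *m Q2 - xp2 *m B in
     invertible_between P2 Q2 Phi /\
     exists (d0 e0 : R) (c : R -> R -> R),
       [/\ 0 < d0, 0 < e0,
        (forall d e : R, 0 < d -> d <= d0 -> 0 < e -> e <= e0 ->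
         forall (t : R) (xs1 xs2 xp1 y1 y2 : 'rV[R]_n),
           tp <= t -> `|t - ts| <= d ->
           range_proj S1 xs1 -> `|xs1 - xs *m S1| <= d ->
           range_proj S2 xs2 -> Ds2 xs2 -> `|xs2 - xs *m S2| <= d ->
           range_proj P1 xp1 -> `|xp1 - xs *m P1| <= d ->
           range_proj P2 y1 -> `|y1 - xs *m P2| < e ->
           range_proj P2 y2 -> `|y2 - xs *m P2| < e ->
           `|Psi t xs1 xs2 xp1 y1 - Psi t xs1 xs2 xp1 y2 - (y1 - y2) *m Phi|
             <= c d e * `|y1 - y2|) &
        exists l : R, l < (inv_opnorm P2 Phi)^-1 /\
          (forall eta : R, 0 < eta -> exists r : R, 0 < r /\
             forall d e : R, 0 < d -> d < r -> 0 < e -> e < r ->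
               `|c d e - l| < eta)]).
Proof.
move=> [decomp _ _] [_ [_ _ _ Q2Q2] _] _ _ pd Dfc Phi_inv.
split; first exact: partial_deriv_loc_lipschitz pd Dfc.
move=> ts xs hts hL hD Phi Psi; have Phi_inv_xs := Phi_inv ts xs hts hL hD.
split=> //.
have [X2_0 | /existsNP [y /not_implyP [yX2 /eqP y_neq0]]] :=
  pselect (forall y, range_proj P2 y -> y = 0).
  pose l := (inv_opnorm P2 Phi)^-1 - 1.
  exists 1, 1, (fun _ _ => l); split=> //; first exact: contraction_bound_trivial.
  exists l; split; first by rewrite ltrBlDr ltrDl.
  by move=> eta eta_gt0; exists 1; split=> // *; rewrite subrr normr0.
have [d0 d0_gt0 bound] := contraction_modulus_bound B Q2 Ds2 xs pd Dfc hts decomp.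
exists d0, d0, (contraction_modulus Q2 tp Df ts xs); split=> //.
exists 0; split; last exact: contraction_modulus_lim.
by rewrite invr_gt0 (inv_opnorm_gt0 Q2Q2 Phi_inv_xs yX2 y_neq0).
Qed.
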